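(* Let $L$ be an IL-algebra in which every element is idempotent (i.e. $x\ast x=x$ for all $x\in L$), and let $F$ be a filter of $L$. Then $F$ is an implicative filter.
   Context: An IL-algebra is a structure $(L,\cup,\cap,\bot,\to,\ast,1)$ such that $(L,\cup,\cap,\bot)$ is a lattice with least element $\bot$, $(L,\ast,1)$ is a commutative monoid with unit $1$, and for all $x,y,z\in L$: $x\ast y\leq z$ iff $x\leq y\to z$. A filter of $L$ is a non-empty $F\subseteq L$ with $1\in F$, such that $x,y\in F$ implies $x\ast y\in F$ and $x\cap y\in F$, and $x\in F$, $x\leq y$ implies $y\in F$. An implicative filter of $L$ is a non-empty $F\subseteq L$ such that $1\in F$ and, for all $x,y,z\in L$, if $x\to(y\to z)\in F$ and $x\to y\in F$ then $x\to z\in F$. *)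

(* An IL-algebra (L, cup, cap, bot, imp, star, one):
   (L, cup, cap) is a lattice (axiomatised algebraically), bot is its least
   element, (L, star, one) is a commutative monoid, and the residuation law
   x * y <= z  <->  x <= y -> z  holds, where the lattice order is
   x <= y  :<->  cap x y = x. *)
Record ILAlgebra := {
  carrier :> Type;
  cup : carrier -> carrier -> carrier;
  cap : carrier -> carrier -> carrier;
  bot : carrier;
  imp : carrier -> carrier -> carrier;
  star : carrier -> carrier -> carrier;
  one : carrier;
  cup_comm : forall x y, cup x y = cup y x;
  cap_comm : forall x y, cap x y = cap y x;
  cup_assoc : forall x y z, cup x (cup y z) = cup (cup x y) z;
  cap_assoc : forall x y z, cap x (cap y z) = cap (cap x y) z;
  cup_absorb : forall x y, cup x (cap x y) = x;
  cap_absorb : forall x y, cap x (cup x y) = x;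
  bot_least : forall x, cap bot x = bot;
  star_comm : forall x y, star x y = star y x;
  star_assoc : forall x y z, star x (star y z) = star (star x y) z;
  star_one : forall x, star x one = x;
  residuation : forall x y z, cap (star x y) z = star x y <-> cap x (imp y z) = x
}.

Arguments cup {_}. Arguments cap {_}. Arguments bot {_}. Arguments imp {_}.
Arguments star {_}. Arguments one {_}.

Definition le {L : ILAlgebra} (x y : L) : Prop := cap x y = x.

Definition is_filter {L : ILAlgebra} (F : L -> Prop) : Prop :=
  (exists x, F x) /\ F one /\
  (forall x y, F x -> F y -> F (star x y) /\ F (cap x y)) /\
  (forall x y, F x -> le x y -> F y).

Definition is_implicative_filter {L : ILAlgebra} (F : L -> Prop) : Prop :=
  (exists x, F x) /\ F one /\
  (forall x y z, F (imp x (imp y z)) -> F (imp x y) -> F (imp x z)).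


(* If x is idempotent, then (a * b) * x = (a * x) * (b * x). Taking
   a = x -> (y -> z) and b = x -> y, residuation gives a * x <= y -> z and
   b * x <= y, so (a * b) * x <= (y -> z) * y <= z, i.e. a * b <= x -> z. *)

Section ILAlgebraOrder.
Variable L : ILAlgebra.

Lemma le_refl (x : L) : le x x.
Proof.
  unfold le. pose proof (cap_absorb L x (cap x x)) as H.
  rewrite (cup_absorb L x x) in H. exact H.
Qed.

Lemma le_trans (x y z : L) : le x y -> le y z -> le x z.
Proof.
  unfold le; intros Hxy Hyz.
  transitivity (cap (cap x y) z); [now rewrite Hxy |].
  rewrite <- cap_assoc, Hyz. exact Hxy.
Qed.

Lemma star_le_imp (x y z : L) : le (star x y) z <-> le x (imp y z).
Proof. apply residuation. Qed.

Lemma imp_star_le (y z : L) : le (star (imp y z) y) z.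
Proof. apply star_le_imp, le_refl. Qed.

Lemma star_le_starl (u u' v : L) : le u u' -> le (star u v) (star u' v).
Proof.
  intros Hu. apply star_le_imp.
  apply le_trans with u'; [exact Hu |].
  apply star_le_imp, le_refl.
Qed.

Lemma star_le_star (u u' v v' : L) :
  le u u' -> le v v' -> le (star u v) (star u' v').
Proof.
  intros Hu Hv. apply le_trans with (star u' v); [now apply star_le_starl |].
  rewrite (star_comm L u' v), (star_comm L u' v'). now apply star_le_starl.
Qed.

Lemma star_distr_idem (a b x : L) :
  star x x = x -> star (star a b) x = star (star a x) (star b x).
Proof.
  intros Hx.
  replace (star (star a b) x) with (star (star a b) (star x x)) by now rewrite Hx.
  rewrite <- !star_assoc. f_equal.
  rewrite (star_assoc L b x x). apply star_comm.
Qed.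

Lemma star_imp_imp_le (x y z : L) :
  star x x = x -> le (star (imp x (imp y z)) (imp x y)) (imp x z).
Proof.
  intros Hx. apply -> star_le_imp. rewrite star_distr_idem by exact Hx.
  apply le_trans with (star (imp y z) y); [| apply imp_star_le].
  apply star_le_star; apply star_le_imp, le_refl.
Qed.

End ILAlgebraOrder.

Theorem mainTheorem10 (L : ILAlgebra)
  (Hidem : forall x : L, star x x = x)
  (F : L -> Prop) (HF : is_filter F) :
  is_implicative_filter F.
Proof.
  destruct HF as [Hne [Hone [Hclosed Hup]]].
  split; [exact Hne | split; [exact Hone |]].
  intros x y z Hxyz Hxy.
  apply Hup with (star (imp x (imp y z)) (imp x y)).
  - now apply Hclosed.
  - now apply star_imp_imp_le.
Qed.
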